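(* Under Assumptions A1–A4, let $n_1<n_2$ be two consecutive switch points of the core Two-Tailed Averaging algorithm. Then there exists an evaluation step $n\in[n_1,n_2-E]$ such that $L(n)=\mathcal{O}^E(n)$ or $L(n)=\mathcal{O}_E(n)$.
   Context: Let $\Theta=\mathbb{R}^d$, let $(\theta_t)_{t\in\mathbb{N}_0}$ be a sequence in $\Theta$, let $f\colon\Theta\to\mathbb{R}$ be a loss function, and let $E\in\mathbb{N}$ be the evaluation period. Evaluation steps are the multiples of $E$. For integers $t\ge \Delta\ge 1$ write $\mathrm{avg}(t,\Delta)=\frac{1}{\Delta}\sum_{i=t+1-\Delta}^{t}\theta_i$; set $f(\mathrm{avg}(t,0))=+\infty$. Core Two-Tailed Averaging: it maintains integers $S,L$ and vectors $\theta^S,\theta^L$, initially $S=L=0$, $\theta^S=\theta^L=0$. For $t=1,2,\dots$: first $\theta_t$ is added to both averages, i.e. $\theta^S\leftarrow\theta^S+(\theta_t-\theta^S)/(S+1)$, $S\leftarrow S+1$, and $\theta^L\leftarrow\theta^L+(\theta_t-\theta^L)/(L+1)$, $L\leftarrow L+1$ (so $\theta^S=\mathrm{avg}(t,S)$, $\theta^L=\mathrm{avg}(t,L)$). Then, if $E$ divides $t$: if $f(\theta^S)\le f(\theta^L)$, a switch is performed: $L\leftarrow S$, $\theta^L\leftarrow\theta^S$, $S\leftarrow 0$. $S(t),L(t)$ denote the values after the $t$-th pass through the loop. A time step $n$ is a switch point if a switch is performed at $t=n$; two switch points are consecutive if no switch point lies strictly between them. Optimal length: for $t\ge1$, $\mathcal{O}(t)$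 is a (fixed) minimizer of $\Delta\mapsto f(\mathrm{avg}(t,\Delta))$ over $\Delta\in\{1,\dots,t\}$; $\mathcal{O}_E(n)=\lfloor \mathcal{O}(n)/E\rfloor E$ and $\mathcal{O}^E(n)=\lceil \mathcal{O}(n)/E\rceil E$. Assumptions (for all evaluation steps $n\ge E$): A1: $\Delta\mapsto f(\mathrm{avg}(n,\Delta))$ is strictly decreasing on $\Delta\in\{0,E,2E,\dots,\mathcal{O}_E(n)\}$. A2: for every integer $n_+$ with $\mathcal{O}^E(n)\le n_+\le n$, $f(\mathrm{avg}(n,\mathcal{O}^E(n)))\le f(\mathrm{avg}(n,n_+))$. A3: there exists a positive multiple $n_s$ of $E$ with $\mathcal{O}(n+n_s)-\mathcal{O}(n)<n_s$. A4: $\mathcal{O}(n)\le\mathcal{O}(n+E)$. *)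

From HB Require Import structures.
From mathcomp Require Import all_boot all_order all_algebra.
From mathcomp Require Import reals constructive_ereal.
Set Implicit Arguments. Unset Strict Implicit. Unset Printing Implicit Defensive.
Import Order.TTheory GRing.Theory Num.Theory.
Local Open Scope ring_scope.

Section TTA.
Variables (R : realType) (d : nat).
Notation vec := 'rV[R]_d.

Definition avg (theta : nat -> vec) (t Delta : nat) : vec :=
  (Delta%:R)^-1 *: \sum_(t.+1 - Delta <= i < t.+1) theta i.

Definition favg (f : vec -> R) (theta : nat -> vec) (t Delta : nat) : \bar R :=
  if Delta == 0%N then +oo%E else (f (avg theta t Delta))%:E.

Record tta_state := TTAState { stS : nat; stL : nat; thS : vec; thL : vec }.

Definition tta_init : tta_state := TTAState 0 0 0 0.

Definition tta_add (th : vec) (st : tta_state) : tta_state :=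
  TTAState (stS st).+1 (stL st).+1
    (thS st + ((stS st).+1%:R)^-1 *: (th - thS st))
    (thL st + ((stL st).+1%:R)^-1 *: (th - thL st)).

Definition tta_switch_cond (f : vec -> R) (E t : nat) (st : tta_state) : bool :=
  (E %| t)%N && (f (thS st) <= f (thL st)).

Definition tta_step (f : vec -> R) (E : nat) (theta : nat -> vec) (t : nat)
    (st : tta_state) : tta_state :=
  let st' := tta_add (theta t) st in
  if tta_switch_cond f E t st' then TTAState 0 (stS st') (thS st') (thS st')
  else st'.

Fixpoint tta_run (f : vec -> R) (E : nat) (theta : nat -> vec) (t : nat)
    : tta_state :=
  match t with
  | 0 => tta_init
  | t'.+1 => tta_step f E theta t'.+1 (tta_run f E theta t')
  end.

Definition Lt (f : vec -> R) (E : nat) (theta : nat -> vec) (t : nat) : nat := stL (tta_run f E theta t).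
Definition St (f : vec -> R) (E : nat) (theta : nat -> vec) (t : nat) : nat := stS (tta_run f E theta t).

Definition switch_point (f : vec -> R) (E : nat) (theta : nat -> vec) (n : nat) : bool :=
  match n with
  | 0 => false
  | n'.+1 => tta_switch_cond f E n'.+1 (tta_add (theta n'.+1) (tta_run f E theta n'))
  end.

Definition is_opt_length (f : vec -> R) (theta : nat -> vec) (O : nat -> nat) : Prop :=
  forall t, (1 <= t)%N ->
    [/\ (1 <= O t)%N, (O t <= t)%N &
        forall Delta, (1 <= Delta <= t)%N ->
          f (avg theta t (O t)) <= f (avg theta t Delta)].

Definition O_lo (E : nat) (O : nat -> nat) n : nat := (O n %/ E * E)%N.
Definition O_up (E : nat) (O : nat -> nat) n : nat :=
  if (E %| O n)%N then O n else ((O n %/ E).+1 * E)%N.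

Definition eval_step (E n : nat) : bool := (E %| n)%N && (E <= n)%N.

Definition A1 (f : vec -> R) (theta : nat -> vec) (E : nat) (O : nat -> nat) : Prop := forall n, eval_step E n ->
  forall k1 k2, (k1 < k2)%N -> (k2 * E <= O_lo E O n)%N ->
    (favg f theta n (k2 * E) < favg f theta n (k1 * E))%E.

Definition A2 (f : vec -> R) (theta : nat -> vec) (E : nat) (O : nat -> nat) : Prop := forall n, eval_step E n ->
  forall np, (O_up E O n <= np <= n)%N ->
    f (avg theta n (O_up E O n)) <= f (avg theta n np).

(* O(n+n_s) - O(n) < n_s, stated in nat without truncated subtraction *)
Definition A3 (E : nat) (O : nat -> nat) : Prop := forall n, eval_step E n ->
  exists ns, [/\ (0 < ns)%N, (E %| ns)%N & (O (n + ns) < O n + ns)%N].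

Definition A4 (E : nat) (O : nat -> nat) : Prop := forall n, eval_step E n ->
  (O n <= O (n + E))%N.

End TTA.

From Pilot Require Import Defs.
From HB Require Import structures.
From mathcomp Require Import all_boot all_order all_algebra.
From mathcomp Require Import reals constructive_ereal.
From mathcomp Require Import zify.
Set Implicit Arguments. Unset Strict Implicit.
Import Order.TTheory GRing.Theory Num.Theory.

(* Between two consecutive switches n1 < n2 nothing resets, so S and L grow by
   E per evaluation period and L (n1 + k E) = L n1 + k E.  At the switch n1,
   L n1 is the short tail, which never exceeds O^E: reaching O^E forces a
   switch by A2, and O^E is nondecreasing by A4.  At the switch n2 the long
   tail must exceed O_E (n2), for otherwise A1 would make it strictly better
   than the short tail.  The progression L n1 + k E thus starts below O^E and
   ends above O_E, and since both move monotonically and lie at most E apart,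
   it meets one of them at an evaluation step. *)

Section RoundingToMultiples.
Variable E : nat.
Hypothesis E_gt0 : (0 < E)%N.

(* [O_lo E O n] and [O_up E O n] are convertible to [floor_mult E (O n)] and
   [ceil_mult E (O n)]. *)
Definition floor_mult x := (x %/ E * E)%N.
Definition ceil_mult x := if (E %| x)%N then x else ((x %/ E).+1 * E)%N.

Lemma dvdn_floor_mult x : (E %| floor_mult x)%N.
Proof. exact: dvdn_mull. Qed.

Lemma dvdn_ceil_mult x : (E %| ceil_mult x)%N.
Proof. by rewrite /ceil_mult; case: ifP => // _; apply: dvdn_mull. Qed.

Lemma floor_mult_leq x : (floor_mult x <= x)%N.
Proof. exact: leq_divM. Qed.

Lemma ceil_mult_geq x : (x <= ceil_mult x)%N.
Proof. by rewrite /ceil_mult; case: ifP => // _; apply/ltnW/ltn_ceil. Qed.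

Lemma ceil_mult_leq_floor_mult x : (ceil_mult x <= floor_mult x + E)%N.
Proof.
rewrite /ceil_mult /floor_mult; case: ifP => [/divnK->|_]; first exact: leq_addr.
by rewrite mulSn addnC.
Qed.

Lemma leq_floor_mult m x : (E %| m)%N -> (m <= x)%N -> (m <= floor_mult x)%N.
Proof. by move=> /dvdnP[c ->] mx; rewrite /floor_mult leq_pmul2r // leq_divRL. Qed.

Lemma ceil_mult_leq m x : (E %| m)%N -> (x <= m)%N -> (ceil_mult x <= m)%N.
Proof.
rewrite /ceil_mult; case: ifP => // Ex /dvdnP[c ->] xm.
rewrite leq_pmul2r // ltn_divLR // ltn_neqAle xm andbT.
by apply: contraFN Ex => /eqP->; apply: dvdn_mull.
Qed.

Lemma floor_mult_homo : {homo floor_mult : x y / (x <= y)%N}.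
Proof.
by move=> x y xy; apply: leq_floor_mult (dvdn_floor_mult x) (leq_trans (floor_mult_leq x) xy).
Qed.

Lemma ceil_mult_homo : {homo ceil_mult : x y / (x <= y)%N}.
Proof.
by move=> x y xy; apply: ceil_mult_leq (dvdn_ceil_mult y) (leq_trans xy (ceil_mult_geq y)).
Qed.

Lemma ceil_mult_geE x : (0 < x)%N -> (E <= ceil_mult x)%N.
Proof. by move=> x_gt0; apply: dvdn_leq (dvdn_ceil_mult x); apply: leq_trans (ceil_mult_geq x). Qed.

Lemma dvdn_ltn_addE a b : (E %| a)%N -> (E %| b)%N -> (a < b)%N -> (a + E <= b)%N.
Proof. by move=> /dvdnP[p ->] /dvdnP[q ->]; rewrite ltn_pmul2r // -mulSnr leq_pmul2r. Qed.

Lemma dvdn_between_floor_ceil m x : (E %| m)%N ->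
  (floor_mult x <= m <= ceil_mult x)%N -> m = ceil_mult x \/ m = floor_mult x.
Proof.
move=> Em /andP[floor_m m_ceil]; case: (ltngtP (floor_mult x) m) => [lt||->]; last by right.
- left; apply/eqP; rewrite eqn_leq m_ceil.
  exact: leq_trans (ceil_mult_leq_floor_mult x) (dvdn_ltn_addE (dvdn_floor_mult x) Em lt).
- by rewrite ltnNge floor_m.
Qed.

Lemma dvdn_ltn_addmul a b : (E %| a)%N -> (E %| b)%N -> (a < b)%N ->
  exists K, b = (a + K.+1 * E)%N.
Proof.
move=> /dvdnP[p ->] /dvdnP[q ->]; rewrite ltn_pmul2r // => pq.
by exists (q - p.+1); rewrite -mulnDl addnS -addSn subnKC.
Qed.

(* The progression can only jump over the window [floor_mult (o k),
   ceil_mult (o k)] if that window moved past it in one step, which [o]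
   nondecreasing forbids. *)
Lemma progression_hits_floor_or_ceil (o : nat -> nat) x K :
  (forall j, o j <= o j.+1)%N -> (E %| x)%N ->
  (x <= ceil_mult (o 0))%N -> (floor_mult (o K) <= x + K * E)%N ->
  exists2 k, (k <= K)%N &
    x + k * E = ceil_mult (o k) \/ x + k * E = floor_mult (o k).
Proof.
move=> o_homo Ex x_ceil.
suff window : forall K, (floor_mult (o K) <= x + K * E)%N ->
    exists2 k, (k <= K)%N & (floor_mult (o k) <= x + k * E <= ceil_mult (o k))%N.
  move=> /window[k kK xk]; exists k => //.
  by apply: dvdn_between_floor_ceil xk; rewrite dvdn_add ?dvdn_mull.
elim=> [|{}K IH] floor_K; first by exists 0%N; rewrite // floor_K mul0n addn0.
have [floor_le|floor_gt] := leqP (floor_mult (o K)) (x + K * E).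
  by have [k kK xk] := IH floor_le; exists k => //; apply: leqW.
exists K.+1 => //; rewrite floor_K /= mulSnr addnA.
have := dvdn_ltn_addE (dvdn_add Ex (dvdn_mull _ (dvdnn E))) (dvdn_floor_mult _) floor_gt.
move/leq_trans; apply; apply: leq_trans (floor_mult_homo (o_homo K)) _.
exact: leq_trans (floor_mult_leq _) (ceil_mult_geq _).
Qed.

End RoundingToMultiples.

Section RunningMean.
Local Open Scope ring_scope.
Variables (R : realType) (d : nat) (theta : nat -> 'rV[R]_d).

Lemma avgS t s : (s <= t)%N ->
  avg theta t.+1 s.+1 = (s.+1%:R)^-1 *: (s%:R *: avg theta t s + theta t.+1).
Proof.
move=> st; rewrite /avg subSS big_nat_recr ?leq_subr //=; congr (_ *: (_ + _)).
have [->|s_gt0] := posnP s; first by rewrite subn0 big_geq // scale0r.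
by rewrite scalerA mulfV ?scale1r // pnatr_eq0 -lt0n.
Qed.

Lemma running_mean t s (x : 'rV[R]_d) : (s <= t)%N -> (s = 0%N \/ x = avg theta t s) ->
  x + (s.+1%:R)^-1 *: (theta t.+1 - x) = avg theta t.+1 s.+1.
Proof.
move=> st; rewrite avgS //.
case=> [->|->]; first by rewrite invr1 !scale1r scale0r add0r addrC subrK.
set c := (s.+1%:R)^-1 : R; set a := avg theta t s.
have cs : c * s%:R = 1 - c by rewrite -[s%:R](addrK 1) natr1 mulrBr mulr1 mulVf // pnatr_eq0.
by rewrite [RHS]scalerDr scalerA cs scalerBl scale1r scalerBr addrA addrAC.
Qed.

End RunningMean.

Lemma modS_congr m n p : m = n %[mod p] -> m.+1 = n.+1 %[mod p].
Proof. by move=> mn; rewrite -[m.+1]addn1 -[n.+1]addn1 -modnDml mn modnDml. Qed.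

Section Run.
Variables (R : realType) (d : nat) (theta : nat -> 'rV[R]_d) (f : 'rV[R]_d -> R).
Variable E : nat.
Hypothesis E_gt0 : (0 < E)%N.

Notation run := (tta_run f E theta).
Notation switch_point := (switch_point f E theta).
Notation St := (St f E theta).
Notation Lt := (Lt f E theta).

Definition tta_invariant (st : tta_state R d) t : Prop :=
  [/\ (stS st <= stL st <= t)%N, stS st = t %[mod E], stL st = t %[mod E],
      stS st = 0%N \/ thS st = avg theta t (stS st) & thL st = avg theta t (stL st)].

Lemma tta_add_avg st t : tta_invariant st t ->
  thS (tta_add (theta t.+1) st) = avg theta t.+1 (stS st).+1 /\
  thL (tta_add (theta t.+1) st) = avg theta t.+1 (stL st).+1.
Proof.
case=> /andP[SL L_le] _ _ thS_avg thL_avg.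
by split; apply: running_mean => //; [apply: leq_trans L_le | right].
Qed.

Lemma tta_run_invariant t : tta_invariant (run t) t.
Proof.
elim: t => [|t inv_t]; first by split=> //; [left | rewrite /= /avg big_geq ?scaler0].
have [add_S add_L] := tta_add_avg inv_t.
case: inv_t => /andP[SL L_le] S_mod L_mod _ _.
rewrite /= /tta_step /tta_switch_cond; case: ifP => [/andP[/eqP Et _]|_].
  split; rewrite //= ?Et ?mod0n ?ltnS ?(leq_trans SL) //; [rewrite -Et; exact: modS_congr | by left].
by split; rewrite /= ?ltnS ?SL ?L_le //; [exact: modS_congr | exact: modS_congr | right].
Qed.

(* The values of S and L at step t once theta_t has been added, i.e. the
   lengths compared by the switch test at step t (for t >= 1). *)
Definition Sadd t := (St t.-1).+1.
Definition Ladd t := (Lt t.-1).+1.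

Lemma switch_pointE t : (0 < t)%N -> switch_point t =
  (E %| t)%N && (f (avg theta t (Sadd t)) <= f (avg theta t (Ladd t)))%R.
Proof.
case: t => // t _; have [add_S add_L] := tta_add_avg (tta_run_invariant t).
by rewrite /Defs.switch_point /tta_switch_cond add_S add_L.
Qed.

Lemma Sadd_Ladd_leq t : (0 < t)%N -> (Sadd t <= Ladd t <= t)%N.
Proof. by case: t => // t _; case: (tta_run_invariant t). Qed.

Lemma dvdn_Sadd_Ladd t : (0 < t)%N -> (E %| t)%N -> (E %| Sadd t)%N && (E %| Ladd t)%N.
Proof.
case: t => // t _; case: (tta_run_invariant t) => _ S_mod L_mod _ _.
by rewrite /dvdn (modS_congr S_mod) (modS_congr L_mod) => ->.
Qed.

Lemma St_Lt_switch t : switch_point t -> St t = 0%N /\ Lt t = Sadd t.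
Proof. by case: t => // t; rewrite /Defs.switch_point /St /Lt /= /tta_step => ->. Qed.

Lemma Lt_at_switch t : switch_point t -> (0 < Lt t)%N && (E %| Lt t)%N.
Proof.
move=> sw; have [_ ->] := St_Lt_switch sw; case: t sw => // t sw.
by have /andP[Et _] := sw; rewrite switch_pointE // in sw; case/andP: (dvdn_Sadd_Ladd (ltn0Sn t) Et).
Qed.

Lemma St_Lt_noswitch t : (0 < t)%N -> ~~ switch_point t -> St t = Sadd t /\ Lt t = Ladd t.
Proof. by case: t => // t _; rewrite /Defs.switch_point /St /Lt /= /tta_step => /negbTE ->. Qed.

Lemma St_Lt_within_period u j : (E %| u)%N -> (j < E)%N ->
  St (u + j) = (St u + j)%N /\ Lt (u + j) = (Lt u + j)%N.
Proof.
move=> Eu; elim: j => [|j IH] jE; first by rewrite !addn0.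
have [IS IL] := IH (ltnW jE).
have no_switch : ~~ switch_point (u + j).+1.
  by rewrite switch_pointE // -addnS dvdn_addr // gtnNdvd.
rewrite addnS; have [-> ->] := St_Lt_noswitch (ltn0Sn _) no_switch.
by rewrite /Sadd /Ladd /= IS IL !addnS.
Qed.

Lemma Sadd_Ladd_next u : (E %| u)%N ->
  Sadd (u + E) = (St u + E)%N /\ Ladd (u + E) = (Lt u + E)%N.
Proof.
have E1_lt : (E.-1 < E)%N by rewrite ltn_predL.
move=> Eu; have [IS IL] := St_Lt_within_period Eu E1_lt.
rewrite /Sadd /Ladd; have -> : (u + E).-1 = (u + E.-1)%N by rewrite -!subn1 addnBA.
by rewrite IS IL -!addnS prednK.
Qed.

Lemma St_Lt_between_switches n j : switch_point n ->
  (forall m, (n < m <= n + j * E)%N -> ~~ switch_point m) ->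
  St (n + j * E) = (j * E)%N /\ Lt (n + j * E) = (Lt n + j * E)%N.
Proof.
move=> sw_n; have En : (E %| n)%N by case: n sw_n => // n; rewrite switch_pointE // => /andP[].
elim: j => [|j IH] no_switch; first by have [S0 _] := St_Lt_switch sw_n; rewrite mul0n !addn0.
have [IS IL] : St (n + j * E) = (j * E)%N /\ Lt (n + j * E) = (Lt n + j * E)%N.
  by apply: IH => m /andP[nm mj]; apply: no_switch; rewrite nm; lia.
have -> : (n + j.+1 * E = n + j * E + E)%N by rewrite mulSnr addnA.
have t_gt0 : (0 < n + j * E + E)%N by rewrite addn_gt0 E_gt0 orbT.
have no_sw : ~~ switch_point (n + j * E + E).
  by apply: no_switch; rewrite mulSnr addnA; lia.
have E_nj : (E %| n + j * E)%N by rewrite dvdn_add ?dvdn_mull.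
have [-> ->] := St_Lt_noswitch t_gt0 no_sw; have [-> ->] := Sadd_Ladd_next E_nj.
by rewrite IS IL mulSnr addnA.
Qed.

End Run.

Section Assumptions.
Variables (R : realType) (d : nat) (theta : nat -> 'rV[R]_d) (f : 'rV[R]_d -> R).
Variables (E : nat) (O : nat -> nat).
Hypothesis E_gt0 : (0 < E)%N.
Hypothesis O_opt : is_opt_length f theta O.
Hypothesis A1f : A1 f theta E O.
Hypothesis A2f : A2 f theta E O.
Hypothesis A4f : A4 E O.

Notation switch_point := (switch_point f E theta).
Notation St := (St f E theta).
Notation Lt := (Lt f E theta).
Notation Sadd := (Sadd theta f E).
Notation Ladd := (Ladd theta f E).

Lemma eval_step_gt0 u : eval_step E u -> (0 < u)%N.
Proof. by case/andP=> _; apply: leq_trans. Qed.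

Lemma eval_step_addE u : eval_step E u -> eval_step E (u + E).
Proof. by case/andP=> Eu _; rewrite /eval_step dvdn_add // leq_addl. Qed.

Lemma switch_point_eval_step t : switch_point t -> eval_step E t.
Proof.
case: t => // t sw; have /andP[Et _] := sw; rewrite switch_pointE // in sw.
by rewrite /eval_step Et dvdn_leq.
Qed.

Lemma switch_of_Sadd_eq_O_up u : eval_step E u -> Sadd u = O_up E O u -> switch_point u.
Proof.
move=> ev_u Sadd_u; have u_gt0 := eval_step_gt0 ev_u.
have /andP[Eu _] := ev_u; have /andP[SL Lu] := Sadd_Ladd_leq theta f E u_gt0.
by rewrite switch_pointE // Eu Sadd_u A2f // -Sadd_u SL.
Qed.

Lemma Sadd_le_O_up u : eval_step E u -> (Sadd u <= O_up E O u)%N.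
Proof.
have O_up_geE v : eval_step E v -> (E <= O_up E O v)%N.
  by move/eval_step_gt0=> v_gt0; apply: ceil_mult_geE => //; case: (O_opt v_gt0).
elim/ltn_ind: u => u IH ev_u; have /andP[Eu E_le_u] := ev_u.
have [u_eq|u_neqE] := eqVneq u E.
  have /andP[SL LE] := Sadd_Ladd_leq theta f E E_gt0.
  by rewrite u_eq (leq_trans (leq_trans SL LE)) //; apply: O_up_geE; rewrite /eval_step dvdnn leqnn.
have ev_v : eval_step E (u - E).
  rewrite /eval_step dvdn_sub // leq_subRL //.
  by apply: dvdn_ltn_addE => //; rewrite ltn_neqAle eq_sym u_neqE.
have v_lt_u : (u - E < u)%N by rewrite ltn_subrL E_gt0 eval_step_gt0.
have Ev : (E %| u - E)%N by case/andP: ev_v.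
rewrite -(subnK E_le_u); have [-> _] := Sadd_Ladd_next theta f E_gt0 Ev.
apply: leq_trans (ceil_mult_homo E_gt0 (A4f ev_v)).
have [sw|no_sw] := boolP (switch_point (u - E)).
  by have [-> _] := St_Lt_switch sw; rewrite add0n O_up_geE.
have [-> _] := St_Lt_noswitch (eval_step_gt0 ev_v) no_sw.
apply: dvdn_ltn_addE; rewrite ?dvdn_ceil_mult //.
  by case/andP: (dvdn_Sadd_Ladd theta f (eval_step_gt0 ev_v) Ev).
rewrite ltn_neqAle IH // andbT; apply: contraNN no_sw => /eqP.
exact: switch_of_Sadd_eq_O_up.
Qed.

Lemma Lt_le_O_up_at_switch u : switch_point u -> (Lt u <= O_up E O u)%N.
Proof.
move=> sw; have [_ ->] := St_Lt_switch sw.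
exact/Sadd_le_O_up/switch_point_eval_step.
Qed.

Lemma O_lo_lt_Ladd_at_switch v : switch_point v -> (Sadd v < Ladd v)%N ->
  (O_lo E O v < Ladd v)%N.
Proof.
move=> sw SL; have ev_v := switch_point_eval_step sw; have v_gt0 := eval_step_gt0 ev_v.
have /andP[Ev _] := ev_v.
have /andP[/dvdnP[k1 Sk1] /dvdnP[k2 Lk2]] := dvdn_Sadd_Ladd theta f v_gt0 Ev.
rewrite ltnNge; apply: contraTN sw => L_le_lo.
have k12 : (k1 < k2)%N by rewrite -(ltn_pmul2r E_gt0) -Sk1 -Lk2.
have := A1f ev_v k12; rewrite -Sk1 -Lk2 => /(_ L_le_lo).
rewrite /favg !gtn_eqF ?(leq_trans _ SL) // lte_fin => lt_f.
by rewrite switch_pointE // negb_and -ltNge lt_f orbT.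
Qed.

Lemma O_lo_le_Lt_before_switch u : eval_step E u -> switch_point (u + E) ->
  (St u < Lt u)%N -> (O_lo E O u <= Lt u)%N.
Proof.
move=> ev_u sw SL; have /andP[Eu _] := ev_u.
have ev_v := eval_step_addE ev_u; have /andP[Ev _] := ev_v.
have [Sadd_v Ladd_v] := Sadd_Ladd_next theta f E_gt0 Eu.
have /andP[_ E_Ladd] := dvdn_Sadd_Ladd theta f (eval_step_gt0 ev_v) Ev.
have lo_lt := O_lo_lt_Ladd_at_switch sw; rewrite Sadd_v Ladd_v ltn_add2r in lo_lt.
rewrite Ladd_v in E_Ladd.
have := dvdn_ltn_addE E_gt0 (dvdn_floor_mult E _) E_Ladd (lo_lt SL).
rewrite leq_add2r; apply: leq_trans.
exact/floor_mult_homo/A4f.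
Qed.

End Assumptions.

Unset Implicit Arguments.

Theorem mainTheorem4 (R : realType) (d : nat) (theta : nat -> 'rV[R]_d)
  (f : 'rV[R]_d -> R) (E : nat) (O : nat -> nat) (n1 n2 : nat) :
  (0 < E)%N ->
  is_opt_length f theta O ->
  A1 f theta E O -> A2 f theta E O -> A3 E O -> A4 E O ->
  switch_point f E theta n1 -> switch_point f E theta n2 -> (n1 < n2)%N ->
  (forall m, (n1 < m < n2)%N -> ~~ switch_point f E theta m) ->
  exists n, [/\ (E %| n)%N, (n1 <= n <= n2 - E)%N &
    Lt f E theta n = O_up E O n \/ Lt f E theta n = O_lo E O n].
Proof.
move=> E_gt0 O_opt A1f A2f _ A4f sw1 sw2 n12 no_switch.
have /andP[E_n1 E_le_n1] := switch_point_eval_step sw1.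
have /andP[E_n2 _] := switch_point_eval_step sw2.
have [K n2E] := dvdn_ltn_addmul E_gt0 E_n1 E_n2 n12.
have ev_j j : eval_step E (n1 + j * E).
  by rewrite /eval_step dvdn_add ?dvdn_mull // (leq_trans E_le_n1) ?leq_addr.
have run_j j : (j <= K)%N ->
    St f E theta (n1 + j * E) = (j * E)%N /\ Lt f E theta (n1 + j * E) = (Lt f E theta n1 + j * E)%N.
  move=> jK; apply: St_Lt_between_switches => // m /andP[n1m mj]; apply: no_switch.
  by rewrite n1m n2E (leq_ltn_trans mj) // ltn_add2l ltn_mul2r E_gt0 ltnS.
have /andP[L1_gt0 E_L1] := Lt_at_switch sw1.
have O_homo j : (O (n1 + j * E) <= O (n1 + j.+1 * E))%N.
  by rewrite mulSnr addnA; apply: A4f.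
have L1_le_up : (Lt f E theta n1 <= O_up E O (n1 + 0 * E))%N.
  by rewrite mul0n addn0; exact: Lt_le_O_up_at_switch.
have lo_le_LK : (O_lo E O (n1 + K * E) <= Lt f E theta n1 + K * E)%N.
  have [SK LK] := run_j K (leqnn K); rewrite -LK.
  apply: (O_lo_le_Lt_before_switch E_gt0 A1f A4f) => //; first by rewrite -addnA -mulSnr -n2E.
  by rewrite SK LK -{1}[(K * E)%N]add0n ltn_add2r.
have [k kK hit] := progression_hits_floor_or_ceil E_gt0 O_homo E_L1 L1_le_up lo_le_LK.
exists (n1 + k * E)%N; split; first by case/andP: (ev_j k).
  by rewrite n2E mulSnr addnA addnK leq_addr leq_add2l leq_mul2r kK orbT.
by have [_ ->] := run_j k kK.
Qed.
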